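(* The map $\mathbf{x}\mapsto(\mathbf{s},h)$, defined on $\mathbb{R}^3\setminus\mathbb{I}$, is injective, where $\mathbf{s}$ is the dispersed projection of $\mathbf{x}$ onto $\mathcal{M}$ and $h$ is its signed height: $h=\|\mathbf{x}-\mathbf{s}\|$ if $\mathbf{x}$ is outside the region enclosed by $\mathcal{M}$ and $h=-\|\mathbf{x}-\mathbf{s}\|$ if $\mathbf{x}$ is inside. That is, if $\mathbf{x}_1,\mathbf{x}_2\in\mathbb{R}^3\setminus\mathbb{I}$ have equal $(\mathbf{s},h)$, then $\mathbf{x}_1=\mathbf{x}_2$.
   Context: Let $\mathcal{M}$ be a triangle mesh in $\mathbb{R}^3$ that is watertight (closed, without self-intersections) and has no faces of zero area. Each face $T=(\mathbf{v}_1,\mathbf{v}_2,\mathbf{v}_3)$ has an outward unit face normal $\mathbf{n}_T$; each vertex $\mathbf{v}$ has a unit vertex normal $\mathbf{n}_{\mathbf{v}}$, and for every face $T$ and every vertex $\mathbf{v}$ of $T$, $\langle \mathbf{n}_{\mathbf{v}},\mathbf{n}_T\rangle>0$. Vertex normal alignment of a face $T$ with orientation $\sigma\in\{+1,-1\}$: put $\mathbf{m}_T=\sigma\mathbf{n}_T$; for each $i\in\{1,2,3\}$ let $j,k$ be the other two indices, $\mathbf{e}_1=\mathbf{v}_j-\mathbf{v}_i$, $\mathbf{e}_2=\mathbf{v}_k-\mathbf{v}_i$, $\mathbf{m}_i=\sigma\mathbf{n}_{\mathbf{v}_i}$, write the in-plane part $\mathbf{m}_i-\langle\mathbf{m}_i,\mathbf{m}_T\rangle\mathbf{m}_T=c_1\mathbf{e}_1+c_2\mathbf{e}_2$,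 and define the aligned normal $\hat{\mathbf{n}}^{T,\sigma}_i=(\mathbf{m}_i-\max(0,c_1)\mathbf{e}_1-\max(0,c_2)\mathbf{e}_2)/\|\mathbf{m}_i-\max(0,c_1)\mathbf{e}_1-\max(0,c_2)\mathbf{e}_2\|$. (Aligned normals depend on the face $T$, not only on the vertex.) Barycentric interpolated projection onto $T$ with orientation $\sigma$: for $\mathbf{x}$ with $l:=\langle\mathbf{x}-\mathbf{v}_1,\sigma\mathbf{n}_T\rangle\ge 0$, set $\mathbf{v}_i'=\mathbf{v}_i+\big(l/\langle\hat{\mathbf{n}}^{T,\sigma}_i,\sigma\mathbf{n}_T\rangle\big)\hat{\mathbf{n}}^{T,\sigma}_i$, forming the parallel triangle $T'=(\mathbf{v}_1',\mathbf{v}_2',\mathbf{v}_3')$ in the plane through $\mathbf{x}$ parallel to $T$. If $\mathbf{x}\in T'$, i.e. $\mathbf{x}=\sum_i\alpha_i\mathbf{v}_i'$ with $\alpha_i\ge0$, $\sum_i\alpha_i=1$, the projection is $\mathbf{s}_T=\sum_i\alpha_i\mathbf{v}_i$. Dispersed projection of $\mathbf{x}$ (with $\sigma=+1$ if $\mathbf{x}$ is outside the region enclosed by $\mathcal{M}$ and $\sigma=-1$ if inside): (1) compute the nearest point $\tilde{\mathbf{s}}$ of $\mathcal{M}$ to $\mathbf{x}$; (2) let $\mathcal{T}$ be the set of faces containing $\tilde{\mathbf{s}}$; (3) apply vertex normal alignment with orientation $\sigma$ to each $T\in\mathcal{T}$; (4) discard those $T$ with $\mathbf{x}\notin T'$;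 (5) compute $\mathbf{s}_T$ for the remaining $T$; (6) let $\mathbf{s}$ be the $\mathbf{s}_T$ nearest to $\mathbf{x}$. It is assumed that for every $\mathbf{x}\in\mathbb{R}^3$ at least one face survives step (4), so $\mathbf{s}$ is defined. Exceptional set: for a face $T$, orientation $\sigma$, and $\mathbf{a}^{T,\sigma}_i=\hat{\mathbf{n}}^{T,\sigma}_i/\langle\hat{\mathbf{n}}^{T,\sigma}_i,\sigma\mathbf{n}_T\rangle$, let $\mathbb{I}$ be the union over all faces $T$, both $\sigma$, and all pairs of distinct vertices $\mathbf{v}_i,\mathbf{v}_j$ of $T$ of the bilinear surfaces $\{(1-u)\mathbf{v}_i+u\mathbf{v}_j+t((1-u)\mathbf{a}^{T,\sigma}_i+u\mathbf{a}^{T,\sigma}_j): u\in[0,1],t\ge0\}$ (a set of Lebesgue measure zero). For $\mathbf{x}\notin\mathbb{I}$, the dispersed projection $\mathbf{s}$ lies in the relative interior of a face. *)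

From HB Require Import structures.
From mathcomp Require Import all_boot all_order all_algebra.
From mathcomp Require Import all_classical all_reals all_analysis.
Set Implicit Arguments. Unset Strict Implicit. Unset Printing Implicit Defensive.
Import Order.TTheory GRing.Theory Num.Theory.
Import numFieldNormedType.Exports.
Local Open Scope ring_scope.
Local Open Scope classical_set_scope.

Section MeshDefs.
Context {R : realType}.
Local Notation vec := 'rV[R]_3.
(* an (oriented) triangular face (v1, v2, v3) *)
Local Notation face := (vec * vec * vec)%type.

Definition vec3 (a b c : R) : vec := \row_(i < 3) nth 0 [:: a; b; c] i.
Definition coord (v : vec) (k : nat) : R := v ord0 (inord k).
Definition dot (u v : vec) : R := \sum_(i < 3) u ord0 i * v ord0 i.
Definition enorm (u : vec) : R := Num.sqrt (dot u u).
Definition cross (u v : vec) : vec :=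
  vec3 (coord u 1 * coord v 2 - coord u 2 * coord v 1)
       (coord u 2 * coord v 0 - coord u 0 * coord v 2)
       (coord u 0 * coord v 1 - coord u 1 * coord v 0).

Definition fv1 (T : face) : vec := T.1.1.
Definition fv2 (T : face) : vec := T.1.2.
Definition fv3 (T : face) : vec := T.2.
Definition verts (T : face) : seq vec := [:: fv1 T; fv2 T; fv3 T].
Definition vtx (T : face) (i : nat) : vec := nth 0 (verts T) i.

Definition face_normal (T : face) : vec :=
  let c := cross (fv2 T - fv1 T) (fv3 T - fv1 T) in (enorm c)^-1 *: c.

Definition bary (a1 a2 a3 : R) (p1 p2 p3 : vec) : vec :=
  a1 *: p1 + a2 *: p2 + a3 *: p3.

Definition in_tri (p1 p2 p3 x : vec) : Prop :=
  exists a1 a2 a3 : R, [/\ 0 <= a1, 0 <= a2, 0 <= a3, a1 + a2 + a3 = 1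
                       & x = bary a1 a2 a3 p1 p2 p3].

Definition in_face (T : face) (x : vec) : Prop := in_tri (fv1 T) (fv2 T) (fv3 T) x.

Definition conv_seq (s : seq vec) (x : vec) : Prop :=
  exists a : vec -> R, [/\ forall p, p \in s -> 0 <= a p,
                           \sum_(p <- undup s) a p = 1
                         & x = \sum_(p <- undup s) a p *: p].

Definition on_mesh (M : seq face) (x : vec) : Prop :=
  exists T, T \in M /\ in_face T x.

Definition no_zero_area_face (M : seq face) : Prop :=
  forall T, T \in M -> cross (fv2 T - fv1 T) (fv3 T - fv1 T) != 0.

Definition closed_mesh (M : seq face) : Prop :=
  forall T, T \in M -> forall a b, a \in verts T -> b \in verts T -> a != b ->
    count (fun T' : face => (a \in verts T') && (b \in verts T')) M = 2%N.

Definition face0 : face := (0, 0, 0).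

(* no self-intersections: two distinct faces of the list are different
   triangles and meet exactly in the convex hull of their common vertices
   (empty, a common vertex, or a common edge) *)
Definition no_self_intersection (M : seq face) : Prop :=
  forall i j : nat, (i < size M)%N -> (j < size M)%N -> i != j ->
    let T1 := nth face0 M i in let T2 := nth face0 M j in
    let com := [seq p <- verts T1 | p \in verts T2] in
    (size (undup com) < 3)%N /\
    forall x, (in_face T1 x /\ in_face T2 x) <-> conv_seq com x.

(* x can be joined to points arbitrarily far away by a continuous path
   avoiding M, i.e. x lies in the unbounded component of R^3 \ M *)
Definition escapes (M : seq face) (x : vec) : Prop :=
  forall B : R, exists (y : vec) (g : R -> vec),
    [/\ B < enorm y, {within `[0, 1], continuous g}, g 0 = x, g 1 = y
      & forall t : R, 0 <= t <= 1 -> ~ on_mesh M (g t)].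

(* region enclosed by M: the bounded complementary components *)
Definition inside (M : seq face) (x : vec) : Prop := ~ on_mesh M x /\ ~ escapes M x.
Definition outside (M : seq face) (x : vec) : Prop := ~ on_mesh M x /\ escapes M x.

Definition outward (M : seq face) : Prop :=
  forall T, T \in M -> forall a1 a2 a3 : R, 0 < a1 -> 0 < a2 -> 0 < a3 ->
    a1 + a2 + a3 = 1 ->
    let p := bary a1 a2 a3 (fv1 T) (fv2 T) (fv3 T) in
    exists e0 : R, 0 < e0 /\ forall e : R, 0 < e -> e < e0 ->
      outside M (p + e *: face_normal T) /\ inside M (p - e *: face_normal T).

Definition vnormals_ok (M : seq face) (nv : vec -> vec) : Prop :=
  forall T, T \in M -> forall v, v \in verts T ->
    enorm (nv v) = 1 /\ 0 < dot (nv v) (face_normal T).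

(* orientation sigma: +1 outside (and on M), -1 inside *)
Definition sgn (M : seq face) (x : vec) : R := if `[< inside M x >] then -1 else 1.

(* aligned normal at vertex vi of face T (vj, vk the two other vertices);
   (c1, c2) are the (unique, by Cramer's rule) coordinates of the in-plane
   part p in the basis (e1, e2) *)
Definition aligned (nv : vec -> vec) (sg : R) (T : face) (vi vj vk : vec) : vec :=
  let mT := sg *: face_normal T in
  let e1 := vj - vi in let e2 := vk - vi in
  let mi := sg *: nv vi in
  let p := mi - dot mi mT *: mT in
  let g11 := dot e1 e1 in let g12 := dot e1 e2 in let g22 := dot e2 e2 in
  let b1 := dot p e1 in let b2 := dot p e2 in
  let D := g11 * g22 - g12 ^+ 2 in
  let c1 := (b1 * g22 - b2 * g12) / D in
  let c2 := (b2 * g11 - b1 * g12) / D in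
  let w := mi - Num.max 0 c1 *: e1 - Num.max 0 c2 *: e2 in
  (enorm w)^-1 *: w.

Definition aligned_at (nv : vec -> vec) (sg : R) (T : face) (i : nat) : vec :=
  aligned nv sg T (vtx T i) (vtx T ((i + 1) %% 3)) (vtx T ((i + 2) %% 3)).

Definition height_l (sg : R) (T : face) (x : vec) : R :=
  dot (x - fv1 T) (sg *: face_normal T).

Definition lifted (nv : vec -> vec) (sg : R) (T : face) (x : vec) (i : nat) : vec :=
  let n := aligned_at nv sg T i in
  vtx T i + (height_l sg T x / dot n (sg *: face_normal T)) *: n.

Definition survives (nv : vec -> vec) (sg : R) (T : face) (x : vec) : Prop :=
  0 <= height_l sg T x /\
  in_tri (lifted nv sg T x 0) (lifted nv sg T x 1) (lifted nv sg T x 2) x.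

Definition proj_face (nv : vec -> vec) (sg : R) (T : face) (x s : vec) : Prop :=
  0 <= height_l sg T x /\
  exists a1 a2 a3 : R, [/\ 0 <= a1, 0 <= a2, 0 <= a3, a1 + a2 + a3 = 1 &
    x = bary a1 a2 a3 (lifted nv sg T x 0) (lifted nv sg T x 1) (lifted nv sg T x 2)] /\
  s = bary a1 a2 a3 (fv1 T) (fv2 T) (fv3 T).

Definition nearest (M : seq face) (x st : vec) : Prop :=
  on_mesh M st /\ forall q, on_mesh M q -> enorm (x - st) <= enorm (x - q).

Definition survival (M : seq face) (nv : vec -> vec) : Prop :=
  forall x st, nearest M x st ->
    exists T, [/\ T \in M, in_face T st & survives nv (sgn M x) T x].

(* s is (a possible value of) the dispersed projection of x; any ties in
   steps (1) and (6) may be broken arbitrarily *)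
Definition dispersed (M : seq face) (nv : vec -> vec) (x s : vec) : Prop :=
  let sg := sgn M x in
  exists st, [/\ nearest M x st,
    exists T, [/\ T \in M, in_face T st & proj_face nv sg T x s]
  & forall T s', T \in M -> in_face T st -> proj_face nv sg T x s' ->
      enorm (x - s) <= enorm (x - s')].

Definition signed_height (M : seq face) (x s : vec) : R :=
  if `[< inside M x >] then - enorm (x - s) else enorm (x - s).

Definition avec (nv : vec -> vec) (sg : R) (T : face) (i : nat) : vec :=
  let n := aligned_at nv sg T i in (dot n (sg *: face_normal T))^-1 *: n.

Definition exceptional (M : seq face) (nv : vec -> vec) (x : vec) : Prop :=
  exists T (sg : R) (i j : nat),
    [/\ T \in M, sg = 1 \/ sg = -1, (i < 3)%N, (j < 3)%N & i != j] /\
    exists u t : R, [/\ 0 <= u <= 1, 0 <= t &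
      x = (1 - u) *: vtx T i + u *: vtx T j
          + t *: ((1 - u) *: avec nv sg T i + u *: avec nv sg T j)].

End MeshDefs.

(* Write a point as x = s + l * W, where s is its dispersed projection, interpolated from
   barycentric coordinates a in a face T, l >= 0 is its height over T and W is the matching
   interpolation of the scaled aligned normals.  Off the exceptional set no coordinate of a
   vanishes (a vanishing one puts x on one of the bilinear surfaces spanned by an edge), so
   s lies in the relative interior of T; as distinct faces of the mesh only meet in the
   convex hull of their common vertices, every face containing s is T itself.  Hence two
   points with the same projection share T, a and W, and the signed height fixes l. *)
From Pilot Require Import Defs.
From HB Require Import structures.
From mathcomp Require Import all_boot all_order all_algebra.
From mathcomp Require Import all_classical all_reals all_analysis.
From mathcomp Require Import ring lra.
Set Implicit Arguments. Unset Strict Implicit.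
Import Order.TTheory GRing.Theory Num.Theory.
Local Open Scope ring_scope.

Section DispersedProjection.
Variable R : realType.
Local Notation vec := 'rV[R]_3.
Local Notation face := (vec * vec * vec)%type.
Local Notation coord := Defs.coord.

Lemma coord_ext (u v : vec) :
  (forall k, (k < 3)%N -> coord u k = coord v k) -> u = v.
Proof. by move=> E; apply/rowP => i; have := E i (ltn_ord i); rewrite /coord inord_val. Qed.

Lemma coordD (u v : vec) k : coord (u + v) k = coord u k + coord v k.
Proof. by rewrite /coord mxE. Qed.

Lemma coordN (u : vec) k : coord (- u) k = - coord u k.
Proof. by rewrite /coord mxE. Qed.

Lemma coordZ a (u : vec) k : coord (a *: u) k = a * coord u k.
Proof. by rewrite /coord mxE. Qed.

Lemma coord0 k : coord (0 : vec) k = 0.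
Proof. by rewrite /coord mxE. Qed.

Definition coordE := (coordD, coordN, coordZ, coord0).

Lemma coord_cross (u v : vec) :
  [/\ coord (cross u v) 0 = coord u 1 * coord v 2 - coord u 2 * coord v 1,
      coord (cross u v) 1 = coord u 2 * coord v 0 - coord u 0 * coord v 2 &
      coord (cross u v) 2 = coord u 0 * coord v 1 - coord u 1 * coord v 0].
Proof. by rewrite /cross /coord !mxE !inordK. Qed.

Lemma dotE (u v : vec) :
  dot u v = coord u 0 * coord v 0 + coord u 1 * coord v 1 + coord u 2 * coord v 2.
Proof.
rewrite /dot !big_ord_recr big_ord0 /= add0r /coord.
by congr (_ * _ + _ * _ + _ * _); congr (_ _ _); apply/val_inj; rewrite /= inordK.
Qed.

Lemma crossZDl a b (u v w : vec) :
  cross (a *: u + b *: v) w = a *: cross u w + b *: cross v w.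
Proof.
have [A0 A1 A2] := coord_cross (a *: u + b *: v) w.
have [U0 U1 U2] := coord_cross u w; have [V0 V1 V2] := coord_cross v w.
apply: coord_ext => -[|[|[|//]]] _; rewrite !coordE ?A0 ?A1 ?A2 ?U0 ?U1 ?U2 ?V0 ?V1 ?V2
  !coordE; ring.
Qed.

Lemma cross_anti (u v : vec) : cross v u = - cross u v.
Proof.
have [A0 A1 A2] := coord_cross v u; have [B0 B1 B2] := coord_cross u v.
by apply: coord_ext => -[|[|[|//]]] _; rewrite coordN ?A0 ?A1 ?A2 ?B0 ?B1 ?B2; ring.
Qed.

Lemma crossvv (u : vec) : cross u u = 0.
Proof.
have [C0 C1 C2] := coord_cross u u.
by apply: coord_ext => -[|[|[|//]]] _; rewrite coord0 ?C0 ?C1 ?C2 mulrC subrr.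
Qed.

Lemma cross0v (u : vec) : cross 0 u = 0.
Proof. by have := crossZDl 0 0 0 0 u; rewrite !scale0r !addr0. Qed.

Lemma crossv0 (u : vec) : cross u 0 = 0.
Proof. by rewrite cross_anti cross0v oppr0. Qed.

Lemma cross_neq0_lin_indep (u v : vec) a b :
  cross u v != 0 -> a *: u + b *: v = 0 -> a = 0 /\ b = 0.
Proof.
move=> nz_uv E.
have Ea : cross (a *: u + b *: v) v = a *: cross u v.
  by rewrite crossZDl crossvv scaler0 addr0.
have Eb : cross u (a *: u + b *: v) = b *: cross u v.
  by rewrite cross_anti crossZDl crossvv scaler0 add0r (cross_anti u v) scalerN opprK.
move: Ea Eb; rewrite E cross0v crossv0 => /esym/eqP + /esym/eqP.
by rewrite !scaler_eq0 (negbTE nz_uv) !orbF => /eqP -> /eqP ->.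
Qed.

Lemma cross_neq0_distinct (v1 v2 v3 : vec) :
  cross (v2 - v1) (v3 - v1) != 0 -> [/\ v1 != v2, v1 != v3 & v2 != v3].
Proof.
move=> nz; split; apply/eqP => E; move: nz;
  by rewrite E ?subrr ?cross0v ?crossv0 ?crossvv eqxx.
Qed.

Lemma bary_affine a1 a2 a3 (p1 p2 p3 : vec) : a1 + a2 + a3 = 1 ->
  bary a1 a2 a3 p1 p2 p3 = p1 + a2 *: (p2 - p1) + a3 *: (p3 - p1).
Proof.
move=> Ha; have -> : a1 = 1 - a2 - a3 by lra.
by apply: coord_ext => k _; rewrite /bary !coordE; ring.
Qed.

Lemma bary_inj (v1 v2 v3 : vec) a1 a2 a3 b1 b2 b3 :
  cross (v2 - v1) (v3 - v1) != 0 -> a1 + a2 + a3 = 1 -> b1 + b2 + b3 = 1 ->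
  bary a1 a2 a3 v1 v2 v3 = bary b1 b2 b3 v1 v2 v3 -> [/\ a1 = b1, a2 = b2 & a3 = b3].
Proof.
move=> nz Ha Hb; rewrite !bary_affine // => E.
have : (a2 - b2) *: (v2 - v1) + (a3 - b3) *: (v3 - v1) = 0.
  apply: coord_ext => k _; rewrite coord0; move/(congr1 (coord^~ k))/eqP: E.
  by rewrite -subr_eq0 => /eqP <-; rewrite !coordE; ring.
by case/(cross_neq0_lin_indep nz) => *; split; lra.
Qed.

Lemma enorm_eq0 (u : vec) : enorm u = 0 -> u = 0.
Proof.
rewrite /enorm dotE => /eqP; rewrite sqrtr_eq0 => H.
have := sqr_ge0 (coord u 0); have := sqr_ge0 (coord u 1); have := sqr_ge0 (coord u 2).
by rewrite !expr2 => *; apply: coord_ext => -[|[|[|//]]] _; rewrite coord0; nra.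
Qed.

Lemma enorm_ge0 (u : vec) : 0 <= enorm u.
Proof. exact: sqrtr_ge0. Qed.

Lemma enormZ l (u : vec) : enorm (l *: u) = `|l| * enorm u.
Proof.
rewrite /enorm (_ : dot _ _ = l ^+ 2 * dot u u); last by rewrite !dotE !coordE; ring.
by rewrite sqrtrM ?sqr_ge0 // sqrtr_sqr.
Qed.

Lemma eq_on_ray_enorm (s w x1 x2 : vec) l1 l2 :
  x1 = s + l1 *: w -> x2 = s + l2 *: w -> 0 <= l1 -> 0 <= l2 ->
  enorm (x1 - s) = enorm (x2 - s) -> x1 = x2.
Proof.
move=> -> -> /ger0_norm l1E /ger0_norm l2E; rewrite !(addrC s) !addrK !enormZ l1E l2E.
have [/enorm_eq0 -> _|nz_w /(mulIf nz_w) -> //] := eqVneq (enorm w) 0.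
by rewrite !scaler0.
Qed.

Definition in_tri_interior (p1 p2 p3 x : vec) : Prop :=
  exists a1 a2 a3 : R, [/\ 0 < a1, 0 < a2, 0 < a3, a1 + a2 + a3 = 1
                       & x = bary a1 a2 a3 p1 p2 p3].

Lemma scaler_if (c : bool) a (v : vec) : (if c then a *: v else 0) = (if c then a else 0) *: v.
Proof. by case: c; rewrite ?scale0r. Qed.

Lemma conv_missing_vertex_not_interior (v1 v2 v3 x : vec) (w : seq vec) :
  cross (v2 - v1) (v3 - v1) != 0 ->
  (size (undup [seq p <- [:: v1; v2; v3] | p \in w]) < 3)%N ->
  conv_seq [seq p <- [:: v1; v2; v3] | p \in w] x -> ~ in_tri_interior v1 v2 v3 x.
Proof.
move=> nz small [a [_ sum_a ->]] [a1 [a2 [a3 [a1_gt0 a2_gt0 a3_gt0 sum_a' Ex]]]].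
have [D12 D13 D23] := cross_neq0_distinct nz.
rewrite undup_id in small sum_a Ex; last first.
  by apply: filter_uniq; rewrite /= !inE negb_or D12 D13 D23.
rewrite big_filter big_mkcond !big_cons big_nil /= addr0 addrA in sum_a.
rewrite big_filter big_mkcond !big_cons big_nil /= !scaler_if addr0 addrA in Ex.
move: small a1_gt0 a2_gt0 a3_gt0 => /=.
have [<- <- <-] := bary_inj nz sum_a sum_a' Ex.
by case: (v1 \in w); case: (v2 \in w); case: (v3 \in w); rewrite ?ltxx.
Qed.

Lemma face_interior_unique M (T1 T2 : face) x :
  no_zero_area_face M -> no_self_intersection M -> T1 \in M -> T2 \in M ->
  in_tri_interior (fv1 T1) (fv2 T1) (fv3 T1) x -> in_face T2 x -> T1 = T2.
Proof.
move=> nz_area simple T1M T2M x_int x_T2; apply/eqP/negPn/negP => T1_neq_T2.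
have i1 : (index T1 M < size M)%N by rewrite index_mem.
have i2 : (index T2 M < size M)%N by rewrite index_mem.
have i12 : index T1 M != index T2 M.
  by apply: contra T1_neq_T2 => /eqP E; rewrite -(nth_index face0 T1M) E nth_index.
have x_T1 : in_face T1 x.
  have [a1 [a2 [a3 [? ? ? ? ->]]]] := x_int.
  by exists a1, a2, a3; split => //; apply: ltW.
move: (simple _ _ i1 i2 i12); rewrite /= !nth_index // => -[small meet].
by apply: conv_missing_vertex_not_interior (nz_area _ T1M) small _ x_int; apply/meet.
Qed.

Lemma sgn_pm1 M (x : vec) : sgn M x = 1 \/ sgn M x = -1.
Proof. by rewrite /sgn; case: `[< _ >]; [right | left]. Qed.

Lemma signed_val_eq (b1 b2 : bool) (e1 e2 : R) : 0 <= e1 -> 0 <= e2 ->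
  (if b1 then - e1 else e1) = (if b2 then - e2 else e2) ->
  e1 = 0 /\ e2 = 0 \/ b1 = b2 /\ e1 = e2.
Proof. by case: b1 b2 => -[] ? ? E; [right | left | left | right]; split => //; lra. Qed.

Lemma eq_signed_height M (x1 x2 s : vec) :
  signed_height M x1 s = signed_height M x2 s ->
  x1 = x2 \/ sgn M x1 = sgn M x2 /\ enorm (x1 - s) = enorm (x2 - s).
Proof.
move/(signed_val_eq (enorm_ge0 _) (enorm_ge0 _)).
case=> [[/enorm_eq0/subr0_eq -> /enorm_eq0/subr0_eq ->] | [Eb Ee]]; first by left.
by right; split => //; rewrite /sgn Eb.
Qed.

Definition interp_avec nv sg (T : face) (a1 a2 a3 : R) : vec :=
  bary a1 a2 a3 (avec nv sg T 0) (avec nv sg T 1) (avec nv sg T 2).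

Lemma lifted_avec nv sg (T : face) x i :
  lifted nv sg T x i = vtx T i + height_l sg T x *: avec nv sg T i.
Proof. by rewrite /lifted /avec /= [in RHS]scalerA. Qed.

Lemma proj_face_decomp nv sg (T : face) x s : proj_face nv sg T x s ->
  exists a1 a2 a3, [/\ 0 <= a1, 0 <= a2, 0 <= a3, a1 + a2 + a3 = 1 &
    s = bary a1 a2 a3 (fv1 T) (fv2 T) (fv3 T) /\
    x = s + height_l sg T x *: interp_avec nv sg T a1 a2 a3].
Proof.
move=> [_ [a1 [a2 [a3 [[? ? ? ? Ex] Es]]]]].
exists a1, a2, a3; split => //; split => //.
rewrite {1}Ex !lifted_avec Es /interp_avec /vtx /=.
move: (height_l _ _ _) (avec _ _ _ 0) (avec _ _ _ 1) (avec _ _ _ 2) => l A1 A2 A3.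
by apply: coord_ext => k _; rewrite /bary !coordE; ring.
Qed.

Lemma not_exceptional_coords_pos M nv sg (T : face) x s a1 a2 a3 l :
  T \in M -> (sg = 1 \/ sg = -1) -> ~ exceptional M nv x ->
  0 <= a1 -> 0 <= a2 -> 0 <= a3 -> a1 + a2 + a3 = 1 -> 0 <= l ->
  s = bary a1 a2 a3 (fv1 T) (fv2 T) (fv3 T) -> x = s + l *: interp_avec nv sg T a1 a2 a3 ->
  [/\ 0 < a1, 0 < a2 & 0 < a3].
Proof.
move=> TM sg_pm nex a1_ge0 a2_ge0 a3_ge0 sum_a l_ge0 -> Ex.
have on_edge (i j : nat) u : (i < 3)%N -> (j < 3)%N -> i != j -> 0 <= u <= 1 ->
    x = (1 - u) *: vtx T i + u *: vtx T j
      + l *: ((1 - u) *: avec nv sg T i + u *: avec nv sg T j) -> False.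
  by move=> *; apply: nex; exists T, sg, i, j; split => //; exists u, l.
rewrite !lt_def a1_ge0 a2_ge0 a3_ge0 !andbT; rewrite /interp_avec /bary in Ex.
split; apply/eqP => a_eq0; rewrite a_eq0 !scale0r ?add0r ?addr0 in Ex.
- apply: (on_edge 1%N 2%N a3) => //; first by apply/andP; split; lra.
  by rewrite Ex (_ : a2 = 1 - a3) //; lra.
- apply: (on_edge 0%N 2%N a3) => //; first by apply/andP; split; lra.
  by rewrite Ex (_ : a1 = 1 - a3) //; lra.
- apply: (on_edge 0%N 1%N a2) => //; first by apply/andP; split; lra.
  by rewrite Ex (_ : a1 = 1 - a2) //; lra.
Qed.

End DispersedProjection.

(* Closedness, outward orientation, the vertex normals and the survival assumption only
   guarantee that the dispersed projection exists, and only x1 has to avoid the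
   exceptional set: injectivity needs none of the rest. *)
Theorem lemma2 (R : realType) (M : seq ('rV[R]_3 * 'rV[R]_3 * 'rV[R]_3))
    (nv : 'rV[R]_3 -> 'rV[R]_3) :
  no_zero_area_face M -> closed_mesh M -> no_self_intersection M -> outward M ->
  vnormals_ok M nv -> survival M nv ->
  forall x1 x2 s : 'rV[R]_3,
    ~ exceptional M nv x1 -> ~ exceptional M nv x2 ->
    dispersed M nv x1 s -> dispersed M nv x2 s ->
    signed_height M x1 s = signed_height M x2 s ->
    x1 = x2.
Proof.
move=> nz_area _ simple _ _ _ x1 x2 s nex1 _.
move=> [_ [_ [T1 [T1M _ proj1]] _]] [_ [_ [T2 [T2M _ proj2]] _]].
case/eq_signed_height => [// | [sgn12 dist12]].
rewrite -sgn12 in proj2.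
have [a1 [a2 [a3 [a1_ge0 a2_ge0 a3_ge0 sum_a [s_a x1E]]]]] := proj_face_decomp proj1.
have [b1 [b2 [b3 [? ? ? sum_b [s_b x2E]]]]] := proj_face_decomp proj2.
have [a1_gt0 a2_gt0 a3_gt0] :=
  not_exceptional_coords_pos T1M (sgn_pm1 M x1) nex1 a1_ge0 a2_ge0 a3_ge0 sum_a proj1.1 s_a x1E.
have T12 : T1 = T2.
  apply: face_interior_unique nz_area simple T1M T2M _ _.
    by exists a1, a2, a3; rewrite -s_a.
  by exists b1, b2, b3; rewrite -s_b.
subst T2; have [eq1 eq2 eq3] := bary_inj (nz_area _ T1M) sum_a sum_b (etrans (esym s_a) s_b).
subst b1 b2 b3.
exact: eq_on_ray_enorm x1E x2E proj1.1 proj2.1 dist12.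
Qed.
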